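(* Let $d\ge1$, let $H$ be a hypergraph of $d$-intervals and let $w$ be a weight system on $H$. Then $\tau^*_w(H)\le 2d\,\nu_w(H)$.
   Context: A $d$-interval is a union of at most $d$ pairwise disjoint closed intervals of the real line $\mathbb{R}$. A hypergraph of $d$-intervals is a finite family $H$ of $d$-intervals, regarded as a hypergraph whose vertices are the points of $\mathbb{R}$ and whose edges are the members of $H$. A matching is a set of pairwise disjoint edges. A weight system on $H$ is a function $w:H\to\mathbb{N}$. $\nu_w(H)$ is the maximum of $\sum_{h\in M}w(h)$ over all matchings $M\subseteq H$. A fractional $w$-cover is a finitely supported function $g:\mathbb{R}\to\mathbb{R}_{\ge0}$ with $\sum_{v\in h}g(v)\ge w(h)$ for every $h\in H$; $\tau^*_w(H)$ is the infimum of $\sum_v g(v)$ over all fractional $w$-covers (equivalently, by LP duality, the supremum of $\sum_{h\in H}w(h)f(h)$ over all $f:H\to\mathbb{R}_{\ge0}$ with $\sum_{h\ni v}f(h)\le1$ for every point $v$). *)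

From Stdlib Require Import Reals List.
Import ListNotations.
Open Scope R_scope.

(* A closed interval [a,b] of the real line, represented by (a,b) with a <= b. *)
Definition interval : Type := (R * R)%type.
Definition valid_interval (I : interval) : Prop := fst I <= snd I.

Definition in_intervalb (x : R) (I : interval) : bool :=
  if Rle_dec (fst I) x then (if Rle_dec x (snd I) then true else false) else false.

(* A (candidate) d-interval: a finite list of closed intervals; its point set is their union. *)
Definition dint : Type := list interval.

Definition in_dintb (x : R) (h : dint) : bool := existsb (in_intervalb x) h.
Definition in_dint (x : R) (h : dint) : Prop := in_dintb x h = true.

Definition is_dinterval (d : nat) (h : dint) : Prop :=
  (1 <= length h <= d)%nat /\ Forall valid_interval h /\
  (forall i j : nat, (i < length h)%nat -> (j < length h)%nat -> i <> j ->
     forall x : R, ~ (in_intervalb x (nth i h (0,0)) = true /\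
                     in_intervalb x (nth j h (0,0)) = true)).

Definition disjoint_dint (h1 h2 : dint) : Prop :=
  forall x : R, ~ (in_dint x h1 /\ in_dint x h2).

(* Hypergraph H : list dint (edges indexed by positions 0 .. length H - 1);
   weight system w : nat -> nat, w i is the weight of edge number i. *)

Definition is_matching (H : list dint) (M : list nat) : Prop :=
  NoDup M /\ (forall i, In i M -> (i < length H)%nat) /\
  (forall i j, In i M -> In j M -> i <> j ->
     disjoint_dint (nth i H nil) (nth j H nil)).

Definition matching_weight (w : nat -> nat) (M : list nat) : nat :=
  fold_right (fun i s => (w i + s)%nat) 0%nat M.

Definition is_nu (H : list dint) (w : nat -> nat) (n : nat) : Prop :=
  (exists M, is_matching H M /\ matching_weight w M = n) /\
  (forall M, is_matching H M -> (matching_weight w M <= n)%nat).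

(* A finitely supported function g : R -> R_{>=0}, given as a list of
   (point, value) pairs; g(v) is the sum of the values attached to v. *)
Definition fsfun : Type := list (R * R).

Definition fs_nonneg (g : fsfun) : Prop := Forall (fun p => 0 <= snd p) g.

Definition mass (g : fsfun) (h : dint) : R :=
  fold_right (fun p s => (if in_dintb (fst p) h then snd p else 0) + s) 0 g.

Definition total (g : fsfun) : R := fold_right (fun p s => snd p + s) 0 g.

Definition is_frac_cover (H : list dint) (w : nat -> nat) (g : fsfun) : Prop :=
  fs_nonneg g /\
  (forall i, (i < length H)%nat -> INR (w i) <= mass g (nth i H nil)).

(* tau*_w(H) <= t, i.e. the infimum of the totals of fractional w-covers is <= t. *)
Definition tau_star_le (H : list dint) (w : nat -> nat) (t : R) : Prop :=
  forall eps : R, eps > 0 ->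
    exists g, is_frac_cover H w g /\ total g <= t + eps.

(* Let P be the list of left endpoints of all intervals of all edges.  We show
   that the linear system "x >= 0 on P, every edge i receives mass >= w_i,
   total mass <= 2 d nu" is feasible; a solution is a fractional w-cover of
   total at most 2 d nu (so the bound even holds with eps = 0).
   1. Farkas' lemma, proved by Fourier-Motzkin elimination: a finite linear
      system is feasible or derives 0 <= b with b < 0 by nonnegative combination.
   2. Weak duality: a refutation of the cover system is an edge weighting
      mu >= 0 whose load at every point of P is at most some th >= 0, with
      sum_i mu_i w_i > 2 d nu th.
   3. Geometry: two meeting unions of intervals contain a left endpoint of one
      another, so averaging over mu x mu finds an edge i0 in the support of mu
      that meets edges of total mu-mass at most 2 d th.
   4. Local ratio: lowering by w(i0) the weight of every edge meeting i0 and
      recursing yields a matching M with sum_i mu_i w_i <= 2 d th w(M)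
      <= 2 d th nu, contradicting 2.
   The file develops finite sums, then steps 1-4 in this order, and derives
   the theorem at the end. *)
From Stdlib Require Import Reals List.
From Stdlib Require Import Lra Lia Classical ClassicalEpsilon.
Import ListNotations.
Open Scope R_scope.

Fixpoint sumn (n : nat) (f : nat -> R) : R :=
  match n with O => 0 | S k => sumn k f + f k end.

Lemma sumn_ext n f g : (forall i, (i < n)%nat -> f i = g i) -> sumn n f = sumn n g.
Proof.
  induction n as [|n IH]; simpl; intros Hfg; auto.
  rewrite IH, Hfg; auto; intros; apply Hfg; lia.
Qed.

Lemma sumn_le n f g : (forall i, (i < n)%nat -> f i <= g i) -> sumn n f <= sumn n g.
Proof.
  induction n as [|n IH]; simpl; intros Hfg; [lra|].
  assert (f n <= g n) by (apply Hfg; lia).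
  assert (sumn n f <= sumn n g) by (apply IH; intros; apply Hfg; lia). lra.
Qed.

Lemma sumn_lt n f g : (forall i, (i < n)%nat -> f i <= g i) ->
  (exists i, (i < n)%nat /\ f i < g i) -> sumn n f < sumn n g.
Proof.
  induction n as [|n IH]; simpl; intros Hfg [i [Hi Hlt]]; [lia|].
  destruct (Nat.eq_dec i n) as [->|Hne].
  - assert (sumn n f <= sumn n g) by (apply sumn_le; intros; apply Hfg; lia). lra.
  - assert (f n <= g n) by (apply Hfg; lia).
    assert (sumn n f < sumn n g)
      by (apply IH; [intros; apply Hfg; lia | exists i; split; [lia|auto]]). lra.
Qed.

Lemma sumn_plus n f g : sumn n (fun i => f i + g i) = sumn n f + sumn n g.
Proof. induction n as [|n IH]; simpl; [lra|]. rewrite IH. lra. Qed.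

Lemma sumn_scal n c f : sumn n (fun i => c * f i) = c * sumn n f.
Proof. induction n as [|n IH]; simpl; [lra|]. rewrite IH. lra. Qed.

Lemma sumn_zero n : sumn n (fun _ => 0) = 0.
Proof. induction n as [|n IH]; simpl; auto. rewrite IH. lra. Qed.

Lemma sumn_swap n m f :
  sumn n (fun i => sumn m (fun j => f i j)) = sumn m (fun j => sumn n (fun i => f i j)).
Proof.
  induction n as [|n IH]; simpl; [now rewrite sumn_zero|].
  rewrite IH, <- sumn_plus. reflexivity.
Qed.

Lemma sumn_single n k c : (k < n)%nat ->
  sumn n (fun i => if Nat.eq_dec i k then c else 0) = c.
Proof.
  induction n as [|n IH]; intros Hk; simpl; [lia|].
  destruct (Nat.eq_dec n k) as [->|Hne].
  - rewrite (sumn_ext _ _ (fun _ => 0)), sumn_zero; [lra|].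
    intros i Hi. destruct (Nat.eq_dec i k); [lia|auto].
  - rewrite IH by lia. lra.
Qed.

(* A linear constraint (a, b) stands for  sum_i a_i x_i <= b. *)
Definition cstr : Type := ((nat -> R) * R)%type.

Definition dot (n : nat) (a x : nat -> R) : R := sumn n (fun i => a i * x i).

Definition feasible (n : nat) (S : list cstr) : Prop :=
  exists x, forall c, In c S -> dot n (fst c) x <= snd c.

Inductive der (S : list cstr) : (nat -> R) -> R -> Prop :=
| der_in : forall a b, In (a, b) S -> der S a b
| der_add : forall a b a' b', der S a b -> der S a' b' ->
     der S (fun i => a i + a' i) (b + b')
| der_scale : forall c a b, 0 <= c -> der S a b -> der S (fun i => c * a i) (c * b)
| der_ext : forall a b a' b', der S a b -> (forall i, a i = a' i) -> b <= b' -> der S a' b'.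

Lemma der_trans S S' a b :
  (forall c, In c S' -> der S (fst c) (snd c)) -> der S' a b -> der S a b.
Proof.
  intros HS' D. induction D.
  - apply (HS' (a, b)); auto.
  - apply der_add; auto.
  - apply der_scale; auto.
  - eapply der_ext; eauto.
Qed.

Lemma der_coef S k a b : (forall c, In c S -> fst c k = 0) -> der S a b -> a k = 0.
Proof.
  intros HS D. induction D as [a b Hin| | |a b a' b' _ IH Hext _].
  - apply (HS (a, b)); auto.
  - rewrite IHD1, IHD2; lra.
  - rewrite IHD; lra.
  - rewrite <- Hext; auto.
Qed.

(* Fourier-Motzkin elimination of the variable m: keep the constraints not
   involving m, and combine each constraint with a positive coefficient of m
   with each one with a negative coefficient so that m cancels. *)
Definition comb (m : nat) (p q : cstr) : cstr :=
  ((fun i => (- fst q m) * fst p i + fst p m * fst q i),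
   (- fst q m) * snd p + fst p m * snd q).

Definition FM (m : nat) (S : list cstr) : list cstr :=
  filter (fun c => if Req_EM_T (fst c m) 0 then true else false) S ++
  flat_map (fun p => map (fun q => comb m p q)
     (filter (fun q => if Rlt_dec (fst q m) 0 then true else false) S))
   (filter (fun p => if Rlt_dec 0 (fst p m) then true else false) S).

Lemma FM_in m S c : In c (FM m S) ->
  (In c S /\ fst c m = 0) \/
  (exists p q, In p S /\ In q S /\ 0 < fst p m /\ fst q m < 0 /\ c = comb m p q).
Proof.
  unfold FM. intros Hc. apply in_app_or in Hc as [Hc|Hc].
  - apply filter_In in Hc as [Hc Hz].
    destruct (Req_EM_T (fst c m) 0); [left; auto | discriminate].
  - right. apply in_flat_map in Hc as [p [Hp Hc]]. apply filter_In in Hp as [Hp Hpm].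
    apply in_map_iff in Hc as [q [<- Hq]]. apply filter_In in Hq as [Hq Hqm].
    destruct (Rlt_dec 0 (fst p m)); [|discriminate].
    destruct (Rlt_dec (fst q m) 0); [|discriminate].
    exists p, q; repeat split; auto.
Qed.

Lemma FM_in_zero m S c : In c S -> fst c m = 0 -> In c (FM m S).
Proof.
  intros. unfold FM. apply in_or_app; left. apply filter_In; split; auto.
  destruct (Req_EM_T (fst c m) 0); auto.
Qed.

Lemma FM_in_comb m S p q : In p S -> In q S -> 0 < fst p m -> fst q m < 0 ->
  In (comb m p q) (FM m S).
Proof.
  intros. unfold FM. apply in_or_app; right. apply in_flat_map. exists p. split.
  - apply filter_In; split; auto. destruct (Rlt_dec 0 (fst p m)); auto; lra.
  - apply in_map. apply filter_In; split; auto. destruct (Rlt_dec (fst q m) 0); auto; lra.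
Qed.

Lemma dot_comb m p q x :
  dot m (fst (comb m p q)) x = (- fst q m) * dot m (fst p) x + fst p m * dot m (fst q) x.
Proof.
  unfold dot, comb; simpl. rewrite <- !sumn_scal, <- sumn_plus.
  apply sumn_ext. intros; ring.
Qed.

Lemma dot_extend m a x t :
  dot (S m) a (fun i => if Nat.eq_dec i m then t else x i) = dot m a x + a m * t.
Proof.
  unfold dot; simpl. destruct (Nat.eq_dec m m) as [_|]; [|lia]. f_equal.
  apply sumn_ext. intros i Hi. destruct (Nat.eq_dec i m); [lia|auto].
Qed.

Lemma finite_separation (C : Type) (lo hi : C -> Prop) (f : C -> R) (L : list C) :
  (forall q p, In q L -> In p L -> lo q -> hi p -> f q <= f p) ->
  exists t, (forall q, In q L -> lo q -> f q <= t) /\ (forall p, In p L -> hi p -> t <= f p).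
Proof.
  induction L as [|c L IH]; intros Hsep.
  - exists 0. split; intros _ [].
  - destruct IH as [t [Hlo Hhi]].
    { intros q p Hq Hp. apply Hsep; right; auto. }
    destruct (classic (lo c /\ t < f c)) as [[Hc Ht]|Hc1].
    { exists (f c). split.
      - intros q [<-|Hq] Hq'; [lra|]. specialize (Hlo q Hq Hq'). lra.
      - intros p Hp Hp'. apply Hsep; auto. left; auto. }
    destruct (classic (hi c /\ f c < t)) as [[Hc Ht]|Hc2].
    { exists (f c). split.
      - intros q Hq Hq'. apply Hsep; auto. left; auto.
      - intros p [<-|Hp] Hp'; [lra|]. specialize (Hhi p Hp Hp'). lra. }
    exists t. split.
    + intros q [<-|Hq] Hq'; auto.
      destruct (Rle_dec (f c) t); auto. exfalso; apply Hc1; split; [auto|lra].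
    + intros p [<-|Hp] Hp'; auto.
      destruct (Rle_dec t (f c)); auto. exfalso; apply Hc2; split; [auto|lra].
Qed.

Lemma FM_lift m L : feasible m (FM m L) -> feasible (S m) L.
Proof.
  intros [x Hx].
  set (U := fun c : cstr => (snd c - dot m (fst c) x) / fst c m).
  destruct (finite_separation _ (fun c => fst c m < 0) (fun c => 0 < fst c m) U L)
    as [t [Hlo Hhi]].
  { intros q p Hq Hp Hqm Hpm.
    pose proof (Hx _ (FM_in_comb m L p q Hp Hq Hpm Hqm)) as Hc.
    rewrite dot_comb in Hc. simpl in Hc.
    unfold U. apply (Rmult_le_reg_r (fst p m * - fst q m)); [nra|].
    replace ((snd q - dot m (fst q) x) / fst q m * (fst p m * - fst q m))
      with (- fst p m * (snd q - dot m (fst q) x)) by (field; lra).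
    replace ((snd p - dot m (fst p) x) / fst p m * (fst p m * - fst q m))
      with (- fst q m * (snd p - dot m (fst p) x)) by (field; lra). lra. }
  exists (fun i => if Nat.eq_dec i m then t else x i).
  intros c Hc. rewrite dot_extend.
  destruct (Rtotal_order (fst c m) 0) as [Hneg|[Hz|Hpos]].
  - specialize (Hlo c Hc Hneg). unfold U in Hlo.
    apply (Rmult_le_compat_r (- fst c m)) in Hlo; [|lra].
    replace ((snd c - dot m (fst c) x) / fst c m * - fst c m)
      with (- (snd c - dot m (fst c) x)) in Hlo by (field; lra). nra.
  - rewrite Hz. pose proof (Hx _ (FM_in_zero m L c Hc Hz)). lra.
  - specialize (Hhi c Hc Hpos). unfold U in Hhi.
    apply (Rmult_le_compat_r (fst c m)) in Hhi; [|lra].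
    replace ((snd c - dot m (fst c) x) / fst c m * fst c m)
      with (snd c - dot m (fst c) x) in Hhi by (field; lra). nra.
Qed.

Lemma FM_der m S c : In c (FM m S) -> der S (fst c) (snd c) /\ fst c m = 0.
Proof.
  intros Hc. apply FM_in in Hc as [[Hc Hz]|[p [q [Hp [Hq [Hpm [Hqm ->]]]]]]].
  - split; auto. destruct c; apply der_in; auto.
  - unfold comb; simpl. split; [|ring].
    apply der_add; apply der_scale; try lra.
    + destruct p; apply der_in; auto.
    + destruct q; apply der_in; auto.
Qed.

Theorem farkas n S : feasible n S \/
  exists a b, der S a b /\ (forall i, (i < n)%nat -> a i = 0) /\ b < 0.
Proof.
  revert S. induction n as [|m IH]; intros S.
  - destruct (classic (exists c, In c S /\ snd c < 0)) as [[c [Hc Hb]]|Hno].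
    + right. exists (fst c), (snd c).
      split; [destruct c; apply der_in; auto | split; auto; intros; lia].
    + left. exists (fun _ => 0). intros c Hc. unfold dot; simpl.
      destruct (Rle_dec 0 (snd c)); auto. exfalso; apply Hno; exists c; split; auto; lra.
  - destruct (IH (FM m S)) as [Hfeas|[a [b [D [Ha Hb]]]]].
    + left. apply FM_lift; auto.
    + right. exists a, b. split; [|split; auto].
      * apply (der_trans _ (FM m S)); auto. intros c Hc. apply (FM_der m); auto.
      * intros i Hi. destruct (Nat.eq_dec i m) as [->|Hne]; [|apply Ha; lia].
        apply (der_coef (FM m S) m a b); auto. intros c Hc. apply (FM_der m S); auto.
Qed.

Definition edge (H : list dint) (i : nat) : dint := nth i H nil.

Definition indc (x : R) (h : dint) : R := if in_dintb x h then 1 else 0.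

Definition lefts (h : dint) : list R := map fst h.

Definition endpoints (H : list dint) : list R := flat_map lefts H.

Definition point (H : list dint) (k : nat) : R := nth k (endpoints H) 0.

Definition load (H : list dint) (mu : nat -> R) (p : R) : R :=
  sumn (length H) (fun j => mu j * indc p (edge H j)).

Lemma indc_bounds x h : 0 <= indc x h <= 1.
Proof. unfold indc; destruct (in_dintb x h); lra. Qed.

Lemma load_plus H mu mu' p : load H (fun i => mu i + mu' i) p = load H mu p + load H mu' p.
Proof. unfold load. rewrite <- sumn_plus. apply sumn_ext; intros; ring. Qed.

Lemma load_scal H c mu p : load H (fun i => c * mu i) p = c * load H mu p.
Proof. unfold load. rewrite <- sumn_scal. apply sumn_ext; intros; ring. Qed.

Lemma load_zero H p : load H (fun _ => 0) p = 0.
Proof. unfold load. rewrite (sumn_ext _ _ (fun _ => 0)) by (intros; ring). apply sumn_zero. Qed.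

Lemma load_single H i p : (i < length H)%nat ->
  load H (fun j => if Nat.eq_dec j i then 1 else 0) p = indc p (edge H i).
Proof.
  intros Hi. unfold load.
  rewrite (sumn_ext _ _ (fun j => if Nat.eq_dec j i then indc p (edge H i) else 0)).
  - apply sumn_single; auto.
  - intros j _. destruct (Nat.eq_dec j i) as [->|]; ring.
Qed.

(* The cover LP, in the variables x_k = mass placed on the k-th endpoint:
   x_k >= 0, each edge i receives mass >= w i, and the total mass is <= T. *)
Definition c_nonneg (k : nat) : cstr := ((fun i => if Nat.eq_dec i k then -1 else 0), 0).

Definition c_edge (H : list dint) (w : nat -> nat) (i : nat) : cstr :=
  ((fun k => - indc (point H k) (edge H i)), - INR (w i)).

Definition c_total (T : R) : cstr := ((fun _ => 1), T).

Definition cover_lp (H : list dint) (w : nat -> nat) (T : R) : list cstr :=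
  map c_nonneg (seq 0 (length (endpoints H))) ++
  map (c_edge H w) (seq 0 (length H)) ++ [c_total T].

Lemma fold_seq (A : Type) (F : A -> R) (G : nat -> A) m :
  fold_right (fun p s => F p + s) 0 (map G (seq 0 m)) = sumn m (fun k => F (G k)).
Proof.
  assert (Hshift : forall c l, fold_right (fun p s => F p + s) c l
                              = fold_right (fun p s => F p + s) 0 l + c).
  { intros c l. induction l as [|a l IH]; simpl; [ring|]. rewrite IH; ring. }
  induction m as [|m IH]; [reflexivity|].
  rewrite seq_S, map_app, fold_right_app. simpl. rewrite Hshift, IH. ring.
Qed.

Lemma cover_of_lp_solution H w T :
  feasible (length (endpoints H)) (cover_lp H w T) ->
  exists g, is_frac_cover H w g /\ total g <= T.
Proof.
  intros [x Hx]. set (m := length (endpoints H)) in *.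
  assert (Hsum : forall F : R * R -> R, fold_right (fun p s => F p + s) 0
            (map (fun k => (point H k, x k)) (seq 0 m)) = sumn m (fun k => F (point H k, x k)))
    by (intros; apply fold_seq).
  exists (map (fun k => (point H k, x k)) (seq 0 m)). split; [split|].
  - apply Forall_forall. intros p Hp. apply in_map_iff in Hp as [k [<- Hk]].
    apply in_seq in Hk. simpl.
    assert (Hin : In (c_nonneg k) (cover_lp H w T))
      by (apply in_or_app; left; apply in_map, in_seq; lia).
    specialize (Hx _ Hin). unfold c_nonneg, dot in Hx; simpl in Hx.
    rewrite (sumn_ext _ _ (fun i => if Nat.eq_dec i k then - x k else 0)) in Hx
      by (intros i _; destruct (Nat.eq_dec i k) as [->|]; ring).
    rewrite sumn_single in Hx by lia. lra.
  - intros i Hi.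
    assert (Hin : In (c_edge H w i) (cover_lp H w T))
      by (apply in_or_app; right; apply in_or_app; left; apply in_map, in_seq; lia).
    specialize (Hx _ Hin). unfold c_edge, dot in Hx; simpl in Hx.
    unfold mass. rewrite Hsum. simpl.
    rewrite (sumn_ext _ _ (fun k => - 1 * (indc (point H k) (edge H i) * x k))) in Hx
      by (intros; ring).
    rewrite sumn_scal in Hx.
    enough (sumn m (fun k => if in_dintb (point H k) (nth i H nil) then x k else 0)
            = sumn m (fun k => indc (point H k) (edge H i) * x k)) by lra.
    apply sumn_ext. intros k _. unfold indc, edge.
    destruct (in_dintb (point H k) (nth i H nil)); ring.
  - assert (Hin : In (c_total T) (cover_lp H w T))
      by (apply in_or_app; right; apply in_or_app; right; left; auto).
    specialize (Hx _ Hin). unfold c_total, dot in Hx; simpl in Hx.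
    unfold total. rewrite Hsum. simpl.
    rewrite (sumn_ext _ _ (fun k => x k)) in Hx by (intros; ring). lra.
Qed.

Definition dual_bound (H : list dint) (w : nat -> nat) (T : R) (a : nat -> R) (b : R) : Prop :=
  exists mu th, (forall i, 0 <= mu i) /\ 0 <= th /\
    (forall k, (k < length (endpoints H))%nat -> a k <= th - load H mu (point H k)) /\
    th * T - sumn (length H) (fun i => mu i * INR (w i)) <= b.

Lemma dual_bound_base H w T c : In c (cover_lp H w T) -> dual_bound H w T (fst c) (snd c).
Proof.
  intros Hin. apply in_app_or in Hin as [Hin|Hin]; [|apply in_app_or in Hin as [Hin|Hin]].
  - apply in_map_iff in Hin as [k [<- _]].
    exists (fun _ => 0), 0. repeat split; [intros; lra|lra| |].
    + intros k' _. rewrite load_zero. simpl. destruct (Nat.eq_dec k' k); lra.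
    + rewrite (sumn_ext _ _ (fun _ => 0)) by (intros; ring). rewrite sumn_zero. simpl; lra.
  - apply in_map_iff in Hin as [i [<- Hi]]. apply in_seq in Hi.
    exists (fun j => if Nat.eq_dec j i then 1 else 0), 0. repeat split.
    + intros j; destruct (Nat.eq_dec j i); lra.
    + lra.
    + intros k _. rewrite load_single by lia. simpl. lra.
    + rewrite (sumn_ext _ _ (fun j => if Nat.eq_dec j i then INR (w i) else 0))
        by (intros j _; destruct (Nat.eq_dec j i) as [->|]; ring).
      rewrite sumn_single by lia. simpl. lra.
  - destruct Hin as [<-|[]].
    exists (fun _ => 0), 1. repeat split; [intros; lra|lra| |].
    + intros k _. rewrite load_zero. simpl. lra.
    + rewrite (sumn_ext _ _ (fun _ => 0)) by (intros; ring). rewrite sumn_zero. simpl; lra.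
Qed.

Lemma der_dual_bound H w T a b : der (cover_lp H w T) a b -> dual_bound H w T a b.
Proof.
  intros D.
  induction D as [a b Hin
                 |a b a' b' _ [mu [th [Hmu [Hth [Ha Hb]]]]] _ [mu' [th' [Hmu' [Hth' [Ha' Hb']]]]]
                 |c a b Hc _ [mu [th [Hmu [Hth [Ha Hb]]]]]
                 |a b a' b' _ [mu [th [Hmu [Hth [Ha Hb]]]]] Hext Hbb'].
  - apply (dual_bound_base H w T (a, b)); auto.
  - exists (fun i => mu i + mu' i), (th + th'). repeat split.
    + intros i; pose proof (Hmu i); pose proof (Hmu' i); lra.
    + lra.
    + intros k Hk. rewrite load_plus. specialize (Ha k Hk); specialize (Ha' k Hk). lra.
    + rewrite (sumn_ext _ _ (fun i => mu i * INR (w i) + mu' i * INR (w i))) by (intros; ring).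
      rewrite sumn_plus. lra.
  - exists (fun i => c * mu i), (c * th). repeat split.
    + intros i; pose proof (Hmu i); nra.
    + nra.
    + intros k Hk. rewrite load_scal. specialize (Ha k Hk). nra.
    + rewrite (sumn_ext _ _ (fun i => c * (mu i * INR (w i)))) by (intros; ring).
      rewrite sumn_scal. nra.
  - exists mu, th. repeat split; auto; [|lra].
    intros k Hk. rewrite <- Hext. auto.
Qed.

Definition meets (H : list dint) (i j : nat) : Prop :=
  exists x, in_dint x (edge H i) /\ in_dint x (edge H j).

Definition meet_ind (H : list dint) (i j : nat) : R :=
  if excluded_middle_informative (meets H i j) then 1 else 0.

Definition lsum (f : R -> R) (L : list R) : R := fold_right (fun p s => f p + s) 0 L.

Lemma lsum_nonneg f L : (forall p, In p L -> 0 <= f p) -> 0 <= lsum f L.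
Proof.
  induction L as [|a L IH]; simpl; intros Hf; [lra|].
  pose proof (Hf a (or_introl eq_refl)). assert (0 <= lsum f L) by (apply IH; auto). lra.
Qed.

Lemma lsum_ge f L p : (forall p, In p L -> 0 <= f p) -> In p L -> f p <= lsum f L.
Proof.
  induction L as [|a L IH]; simpl; intros Hf Hp; [contradiction|].
  destruct Hp as [->|Hp].
  - assert (0 <= lsum f L) by (apply lsum_nonneg; auto). lra.
  - pose proof (Hf a (or_introl eq_refl)). assert (f p <= lsum f L) by (apply IH; auto). lra.
Qed.

Lemma lsum_le_const f L c : (forall p, In p L -> f p <= c) -> lsum f L <= INR (length L) * c.
Proof.
  induction L as [|a L IH]; intros Hf; simpl length; [simpl; lra|].
  rewrite S_INR. unfold lsum; simpl; fold (lsum f L).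
  pose proof (Hf a (or_introl eq_refl)).
  assert (lsum f L <= INR (length L) * c) by (apply IH; intros; apply Hf; right; auto). lra.
Qed.

Lemma lsum_scal c f L : lsum (fun p => c * f p) L = c * lsum f L.
Proof. induction L as [|a L IH]; simpl; [ring|]. rewrite IH. ring. Qed.

Lemma sumn_lsum n F L :
  sumn n (fun j => lsum (fun p => F j p) L) = lsum (fun p => sumn n (fun j => F j p)) L.
Proof.
  induction L as [|a L IH]; simpl; [apply sumn_zero|]. rewrite sumn_plus, IH. reflexivity.
Qed.

Lemma in_dint_ex x h : in_dint x h -> exists I, In I h /\ fst I <= x <= snd I.
Proof.
  unfold in_dint, in_dintb. intros Hx. apply existsb_exists in Hx as [I [HI Hx]].
  exists I; split; auto. unfold in_intervalb in Hx.
  destruct (Rle_dec (fst I) x); [|discriminate]. destruct (Rle_dec x (snd I)); [lra|discriminate].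
Qed.

Lemma in_dint_of x h I : In I h -> fst I <= x <= snd I -> in_dintb x h = true.
Proof.
  intros HI Hx. unfold in_dintb. apply existsb_exists. exists I; split; auto.
  unfold in_intervalb.
  destruct (Rle_dec (fst I) x); [|lra]. destruct (Rle_dec x (snd I)); [auto|lra].
Qed.

Lemma meets_self d H i : (i < length H)%nat -> (forall h, In h H -> is_dinterval d h) ->
  meets H i i.
Proof.
  intros Hi Hd. destruct (Hd (edge H i) (nth_In _ _ Hi)) as [[Hlen _] [Hvalid _]].
  destruct (edge H i) as [|I l] eqn:E; simpl in Hlen; [lia|]. inversion Hvalid; subst.
  exists (fst I). unfold in_dint. rewrite E.
  split; apply (in_dint_of _ _ I); simpl; auto; unfold valid_interval in *; lra.
Qed.

Definition cross (H : list dint) (i j : nat) : R :=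
  lsum (fun p => indc p (edge H j)) (lefts (edge H i)).

Lemma cross_nonneg H i j : 0 <= cross H i j.
Proof. apply lsum_nonneg; intros; apply indc_bounds. Qed.

(* Key geometric fact: if two unions of intervals meet, then the left endpoint of
   one of the two intervals containing a common point lies in the other union. *)
Lemma meet_ind_le_cross H i j : meet_ind H i j <= cross H i j + cross H j i.
Proof.
  unfold meet_ind. pose proof (cross_nonneg H i j). pose proof (cross_nonneg H j i).
  destruct (excluded_middle_informative (meets H i j)) as [[x [Hi Hj]]|]; [|lra].
  apply in_dint_ex in Hi as [I [HI HxI]]. apply in_dint_ex in Hj as [J [HJ HxJ]].
  destruct (Rle_dec (fst I) (fst J)).
  - assert (Hle : indc (fst J) (edge H i) <= cross H j i).
    { apply (lsum_ge (fun p => indc p (edge H i)));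
        [intros; apply indc_bounds | apply in_map; auto]. }
    unfold indc in Hle. rewrite (in_dint_of _ _ I) in Hle by (auto; lra). lra.
  - assert (Hle : indc (fst I) (edge H j) <= cross H i j).
    { apply (lsum_ge (fun p => indc p (edge H j)));
        [intros; apply indc_bounds | apply in_map; auto]. }
    unfold indc in Hle. rewrite (in_dint_of _ _ J) in Hle by (auto; lra). lra.
Qed.

Lemma cross_load_bound d H mu th i : 0 <= th -> (i < length H)%nat ->
  (length (edge H i) <= d)%nat ->
  (forall p, In p (endpoints H) -> load H mu p <= th) ->
  sumn (length H) (fun j => mu j * cross H i j) <= INR d * th.
Proof.
  intros Hth Hi Hlen Hload.
  replace (sumn (length H) (fun j => mu j * cross H i j))
    with (lsum (load H mu) (lefts (edge H i))).
  - eapply Rle_trans; [apply lsum_le_const|].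
    + intros p Hp. apply Hload, in_flat_map.
      exists (edge H i). split; auto. apply nth_In; auto.
    + unfold lefts. rewrite length_map. apply Rmult_le_compat_r; auto. apply le_INR; auto.
  - unfold cross, load. rewrite <- (sumn_lsum _ (fun j p => mu j * indc p (edge H j))).
    apply sumn_ext. intros j _. apply lsum_scal.
Qed.

(* Averaging over mu x mu: by meet_ind_le_cross and symmetry, the mu-mass of
   meeting pairs is at most 2 d th times the total mass of mu. *)
Lemma meeting_mass_bound d H mu th : 0 <= th -> (forall i, 0 <= mu i) ->
  (forall i, (i < length H)%nat -> (length (edge H i) <= d)%nat) ->
  (forall p, In p (endpoints H) -> load H mu p <= th) ->
  sumn (length H) (fun i => mu i * sumn (length H) (fun j => mu j * meet_ind H i j))
  <= sumn (length H) (fun i => mu i * (2 * INR d * th)).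
Proof.
  intros Hth Hmu Hlen Hload. set (n := length H).
  set (X := sumn n (fun i => mu i * sumn n (fun j => mu j * cross H i j))).
  assert (Hsplit : sumn n (fun i => mu i * sumn n (fun j => mu j * meet_ind H i j))
                   <= X + sumn n (fun i => mu i * sumn n (fun j => mu j * cross H j i))).
  { unfold X. rewrite <- sumn_plus. apply sumn_le. intros i _.
    rewrite <- Rmult_plus_distr_l, <- sumn_plus. apply Rmult_le_compat_l; auto.
    apply sumn_le. intros j _. rewrite <- Rmult_plus_distr_l.
    apply Rmult_le_compat_l; auto. apply meet_ind_le_cross. }
  assert (Hsym : sumn n (fun i => mu i * sumn n (fun j => mu j * cross H j i)) = X).
  { unfold X. transitivity (sumn n (fun i => sumn n (fun j => mu j * (mu i * cross H j i)))).
    - apply sumn_ext; intros; rewrite <- sumn_scal; apply sumn_ext; intros; ring.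
    - rewrite sumn_swap.
      apply sumn_ext; intros; rewrite <- sumn_scal; apply sumn_ext; intros; ring. }
  assert (HX : X <= sumn n (fun i => mu i * (INR d * th))).
  { apply sumn_le. intros i Hi. apply Rmult_le_compat_l; auto.
    apply cross_load_bound; auto. }
  replace (sumn n (fun i => mu i * (2 * INR d * th)))
    with (2 * sumn n (fun i => mu i * (INR d * th))); [lra|].
  rewrite <- sumn_scal. apply sumn_ext; intros; ring.
Qed.

Lemma low_meeting_edge d H mu th : 0 <= th -> (forall i, 0 <= mu i) ->
  (forall i, (i < length H)%nat -> (length (edge H i) <= d)%nat) ->
  (forall p, In p (endpoints H) -> load H mu p <= th) ->
  (exists i, (i < length H)%nat /\ 0 < mu i) ->
  exists i0, (i0 < length H)%nat /\ 0 < mu i0 /\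
    sumn (length H) (fun j => mu j * meet_ind H i0 j) <= 2 * INR d * th.
Proof.
  intros Hth Hmu Hlen Hload [i [Hi Hpos]]. apply NNPP. intros Hno.
  assert (Hbig : forall k, (k < length H)%nat -> 0 < mu k ->
                 2 * INR d * th < sumn (length H) (fun j => mu j * meet_ind H k j)).
  { intros k Hk Hk'. apply Rnot_le_lt. intros Hle. apply Hno. exists k; auto. }
  pose proof (meeting_mass_bound d H mu th Hth Hmu Hlen Hload) as Hmass.
  apply (Rle_not_lt _ _ Hmass). apply sumn_lt.
  - intros k Hk. destruct (Rle_lt_or_eq_dec 0 (mu k) (Hmu k)) as [Hk'|<-]; [|lra].
    apply Rmult_le_compat_l; [lra|]. apply Rlt_le, Hbig; auto.
  - exists i. split; auto. apply Rmult_lt_compat_l; auto.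
Qed.

(* nsum n f = f 0 + ... + f (n - 1), in nat: the measure of the local-ratio induction. *)
Fixpoint nsum (n : nat) (f : nat -> nat) : nat :=
  match n with O => O | S k => (nsum k f + f k)%nat end.

Lemma nsum_lt n f g : (forall i, (i < n)%nat -> (f i <= g i)%nat) ->
  (exists i, (i < n)%nat /\ (f i < g i)%nat) -> (nsum n f < nsum n g)%nat.
Proof.
  intros Hfg [i [Hi Hlt]].
  assert (Hle : forall k, (k <= n)%nat -> (nsum k f <= nsum k g)%nat).
  { induction k as [|k IH]; simpl; intros Hk; [lia|].
    specialize (Hfg k ltac:(lia)). specialize (IH ltac:(lia)). lia. }
  induction n as [|n IH]; simpl; [lia|].
  destruct (Nat.eq_dec i n) as [->|Hne].
  - specialize (Hle n (Nat.le_succ_diag_r n)). simpl in Hle. lia.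
  - assert (f n <= g n)%nat by (apply Hfg; lia).
    assert (nsum n f < nsum n g)%nat.
    { apply IH; [intros; apply Hfg; lia|lia|intros k Hk; apply Hle; lia]. }
    lia.
Qed.

Lemma empty_matching H : is_matching H nil.
Proof. split; [constructor|split; intros; contradiction]. Qed.

Lemma matching_weight_filter_pos w M :
  matching_weight w (filter (fun j => Nat.ltb 0 (w j)) M) = matching_weight w M.
Proof.
  induction M as [|a M IH]; simpl; auto.
  destruct (Nat.ltb 0 (w a)) eqn:E; simpl; rewrite IH; auto. apply Nat.ltb_ge in E. lia.
Qed.

Lemma matching_weight_mono w w' M : (forall j, In j M -> (w' j <= w j)%nat) ->
  (matching_weight w' M <= matching_weight w M)%nat.
Proof.
  induction M as [|a M IH]; simpl; intros Hw; auto.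
  pose proof (Hw a (or_introl eq_refl)).
  assert (matching_weight w' M <= matching_weight w M)%nat by (apply IH; auto). lia.
Qed.

Lemma matching_weight_gain w w' M c j : (forall j, In j M -> (w' j <= w j)%nat) ->
  In j M -> (w' j + c <= w j)%nat -> (matching_weight w' M + c <= matching_weight w M)%nat.
Proof.
  induction M as [|a M IH]; simpl; intros Hw Hj Hjc; [contradiction|].
  destruct Hj as [<-|Hj].
  - assert (matching_weight w' M <= matching_weight w M)%nat
      by (apply matching_weight_mono; auto). lia.
  - pose proof (Hw a (or_introl eq_refl)).
    assert (matching_weight w' M + c <= matching_weight w M)%nat by (apply IH; auto). lia.
Qed.

Definition restrict (w : nat -> nat) (mu : nat -> R) (i : nat) : R :=
  if Nat.ltb 0 (w i) then mu i else 0.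

Lemma restrict_nonneg w mu i : (forall i, 0 <= mu i) -> 0 <= restrict w mu i.
Proof. intros Hmu. unfold restrict. destruct (Nat.ltb 0 (w i)); [apply Hmu|lra]. Qed.

Lemma restrict_pos w mu i : 0 < restrict w mu i -> (0 < w i)%nat.
Proof. unfold restrict. destruct (Nat.ltb 0 (w i)) eqn:E; [intros; apply Nat.ltb_lt; auto|lra]. Qed.

Lemma restrict_load H w mu p : (forall i, 0 <= mu i) -> load H (restrict w mu) p <= load H mu p.
Proof.
  intros Hmu. apply sumn_le. intros j _. pose proof (indc_bounds p (edge H j)).
  apply Rmult_le_compat_r; [lra|]. unfold restrict. destruct (Nat.ltb 0 (w j)); [lra|apply Hmu].
Qed.

Lemma restrict_weighted_sum n w mu :
  sumn n (fun i => mu i * INR (w i)) = sumn n (fun i => restrict w mu i * INR (w i)).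
Proof.
  apply sumn_ext. intros i _. unfold restrict. destruct (Nat.ltb 0 (w i)) eqn:E; auto.
  apply Nat.ltb_ge in E. replace (w i) with 0%nat by lia. simpl; ring.
Qed.

Definition reduce (H : list dint) (w : nat -> nat) (i0 j : nat) : nat :=
  if excluded_middle_informative (meets H i0 j) then (w j - w i0)%nat else w j.

Lemma reduce_le H w i0 j : (reduce H w i0 j <= w j)%nat.
Proof. unfold reduce. destruct (excluded_middle_informative (meets H i0 j)); lia. Qed.

Lemma reduce_nsum_lt H w i0 : (i0 < length H)%nat -> meets H i0 i0 -> (0 < w i0)%nat ->
  (nsum (length H) (reduce H w i0) < nsum (length H) w)%nat.
Proof.
  intros Hi0 Hself Hw0. apply nsum_lt; [intros; apply reduce_le|].
  exists i0. split; auto. unfold reduce.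
  destruct (excluded_middle_informative (meets H i0 i0)); [lia|contradiction].
Qed.

Lemma reduce_charge H w i0 mu : (forall i, 0 <= mu i) ->
  sumn (length H) (fun i => mu i * INR (w i))
  <= sumn (length H) (fun i => mu i * INR (reduce H w i0 i))
     + INR (w i0) * sumn (length H) (fun j => mu j * meet_ind H i0 j).
Proof.
  intros Hmu. rewrite <- sumn_scal, <- sumn_plus. apply sumn_le. intros j _.
  unfold reduce, meet_ind. pose proof (Hmu j).
  destruct (excluded_middle_informative (meets H i0 j)); [|lra].
  assert (INR (w j) <= INR (w j - w i0) + INR (w i0)) by (rewrite <- plus_INR; apply le_INR; lia).
  nra.
Qed.

(* A matching for the reduced weights yields one for w that gains w i0: either
   it already uses an edge meeting i0 with positive reduced weight, or i0 can be added. *)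
Lemma extend_matching H w i0 M' : (i0 < length H)%nat -> meets H i0 i0 ->
  is_matching H M' -> exists M, is_matching H M /\
    (matching_weight (reduce H w i0) M' + w i0 <= matching_weight w M)%nat.
Proof.
  intros Hi0 Hself HM'. set (w' := reduce H w i0).
  set (M'' := filter (fun j => Nat.ltb 0 (w' j)) M').
  assert (HM'' : is_matching H M'').
  { destruct HM' as [Hnd [Hin Hdis]]. split; [apply NoDup_filter; auto|split].
    - intros i Hi; apply filter_In in Hi; apply Hin; tauto.
    - intros i j Hi Hj; apply filter_In in Hi; apply filter_In in Hj; apply Hdis; tauto. }
  rewrite <- (matching_weight_filter_pos w' M'). fold M''.
  destruct (classic (exists j, In j M'' /\ meets H i0 j)) as [[j [Hj Hmeet]]|Hnone].
  - exists M''. split; auto. apply (matching_weight_gain _ _ _ _ j); auto.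
    + intros; apply reduce_le.
    + apply filter_In in Hj as [_ Hj]. apply Nat.ltb_lt in Hj. unfold w', reduce in *.
      destruct (excluded_middle_informative (meets H i0 j)); [lia|contradiction].
  - exists (i0 :: M''). split.
    + destruct HM'' as [Hnd [Hin Hdis]]. split; [constructor; auto|split].
      * intros Hi. apply Hnone; exists i0; auto.
      * intros i [<-|Hi]; auto.
      * intros i j [<-|Hi] [<-|Hj] Hne; try (exfalso; apply Hne; reflexivity).
        -- intros x [Ha Hb]. apply Hnone; exists j; split; auto; exists x; auto.
        -- intros x [Ha Hb]. apply Hnone; exists i; split; auto; exists x; auto.
        -- apply Hdis; auto.
    + simpl. assert (matching_weight w' M'' <= matching_weight w M'')%nat
        by (apply matching_weight_mono; intros; apply reduce_le). lia.
Qed.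

Lemma local_ratio d H th : (forall h, In h H -> is_dinterval d h) -> 0 <= th ->
  forall w mu, (forall i, 0 <= mu i) -> (forall p, In p (endpoints H) -> load H mu p <= th) ->
  exists M, is_matching H M /\
    sumn (length H) (fun i => mu i * INR (w i)) <= 2 * INR d * th * INR (matching_weight w M).
Proof.
  intros Hd Hth w.
  assert (Hlen : forall i, (i < length H)%nat -> (length (edge H i) <= d)%nat).
  { intros i Hi. destruct (Hd (edge H i) (nth_In _ _ Hi)) as [[_ ?] _]; auto. }
  remember (nsum (length H) w) as W eqn:HW. revert w HW.
  induction W as [W IH] using Wf_nat.lt_wf_ind. intros w -> mu Hmu Hload.
  set (mu' := restrict w mu).
  assert (Hmu' : forall i, 0 <= mu' i) by (intros; apply restrict_nonneg; auto).
  assert (Hload' : forall p, In p (endpoints H) -> load H mu' p <= th).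
  { intros p Hp. eapply Rle_trans; [apply restrict_load; auto|apply Hload; auto]. }
  rewrite restrict_weighted_sum. fold mu'.
  destruct (classic (exists i, (i < length H)%nat /\ 0 < mu' i)) as [Hex|Hno].
  2: { exists nil. split; [apply empty_matching|]. simpl. rewrite Rmult_0_r.
       rewrite <- (sumn_zero (length H)). apply Req_le, sumn_ext. intros i Hi.
       destruct (Rle_lt_or_eq_dec 0 (mu' i) (Hmu' i)) as [Hp|<-]; [|ring].
       exfalso; apply Hno; exists i; auto. }
  destruct (low_meeting_edge d H mu' th Hth Hmu' Hlen Hload' Hex) as [i0 [Hi0 [Hpos Hsum]]].
  pose proof (restrict_pos w mu i0 Hpos) as Hw0.
  pose proof (meets_self d H i0 Hi0 Hd) as Hself.
  destruct (IH _ (reduce_nsum_lt H w i0 Hi0 Hself Hw0) (reduce H w i0) eq_refl mu' Hmu' Hload')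
    as [M' [HM' Hineq]].
  destruct (extend_matching H w i0 M' Hi0 Hself HM') as [M [HM Hgain]].
  exists M. split; auto.
  apply le_INR in Hgain. rewrite plus_INR in Hgain.
  pose proof (reduce_charge H w i0 mu' Hmu').
  assert (0 <= 2 * INR d * th) by (pose proof (pos_INR d); nra).
  assert (INR (w i0) * sumn (length H) (fun j => mu' j * meet_ind H i0 j)
          <= INR (w i0) * (2 * INR d * th)) by (apply Rmult_le_compat_l; [apply pos_INR|auto]).
  nra.
Qed.

Theorem theorem1p8 (d : nat) (H : list dint) (w : nat -> nat) (n : nat) :
  (1 <= d)%nat ->
  (forall h, In h H -> is_dinterval d h) ->
  is_nu H w n ->
  tau_star_le H w (2 * INR d * INR n).
Proof.
  intros _ Hd [_ Hmax] eps Heps. set (T := 2 * INR d * INR n).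
  destruct (farkas (length (endpoints H)) (cover_lp H w T)) as [Hfeas|[a [b [D [Ha Hb]]]]].
  - destruct (cover_of_lp_solution H w T Hfeas) as [g [Hg Htot]].
    exists g. split; auto. lra.
  - exfalso. destruct (der_dual_bound H w T a b D) as [mu [th [Hmu [Hth [Hpts Hval]]]]].
    assert (Hload : forall p, In p (endpoints H) -> load H mu p <= th).
    { intros p Hp. apply In_nth with (d := 0) in Hp as [k [Hk <-]].
      specialize (Hpts k Hk). rewrite Ha in Hpts by auto. unfold point in Hpts. lra. }
    destruct (local_ratio d H th Hd Hth w mu Hmu Hload) as [M [HM Hle]].
    pose proof (le_INR _ _ (Hmax M HM)) as HMn.
    assert (0 <= 2 * INR d * th) by (pose proof (pos_INR d); nra).
    assert (2 * INR d * th * INR (matching_weight w M) <= th * T) by (unfold T; nra).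
    lra.
Qed.
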